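(* Let $L$ be a finite lattice and $h:L\to\mathbb{R}$ be submodular, i.e. $h(x)+h(y)\ge h(x\uplus y)+h(x\cap y)$ for all $x,y\in L$. Suppose $h$ is increasing at $\cap$-irreducible elements, i.e. $h(a)\ge h(c)$ whenever $c$ is $\cap$-irreducible and $a\supseteq c$. Then $h$ is increasing: $a\supseteq c$ implies $h(a)\ge h(c)$ for all $a,c\in L$.
   Context: Lattices have order $\supseteq$, meet $\cap$, join $\uplus$. An element $c$ is $\cap$-irreducible if $c=x\cap y$ implies $c=x$ or $c=y$, and $c$ is not the top element. *)

From mathcomp Require Import all_boot all_order all_algebra.
Set Implicit Arguments. Unset Strict Implicit. Unset Printing Implicit Defensive.
Import Order.TTheory GRing.Theory Num.Theory.

(* The paper's lattice order "a ⊇ c" is the lattice order c <= a,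
   "∩" is the meet `&`, "⊎" is the join `|`. *)

Definition is_top (d : Order.disp_t) (L : latticeType d) (c : L) : Prop :=
  forall x : L, (x <= c)%O.

Definition meet_irreducible (d : Order.disp_t) (L : latticeType d) (c : L) : Prop :=
  (forall x y : L, c = (x `&` y)%O -> c = x \/ c = y) /\ ~ is_top c.

Local Open Scope ring_scope.

Definition submodular (d : Order.disp_t) (L : latticeType d) (R : numDomainType)
  (h : L -> R) : Prop :=
  forall x y : L, h (x `|` y)%O + h (x `&` y)%O <= h x + h y.

From mathcomp Require Import all_boot all_order all_algebra.
From Stdlib Require Import Classical.
Set Implicit Arguments. Unset Strict Implicit. Unset Printing Implicit Defensive.
Import Order.TTheory GRing.Theory Num.Theory.
Local Open Scope ring_scope.

(* Induction downwards from the top: a meet-reducible, non-top c is x ∩ y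
   with c < x and c < y, and by induction h is increasing above x and
   above y.  Submodularity turns h x <= h (a ⊎ x) into h (a ∩ x) <= h a,
   so h c = h (a ∩ x ∩ y) <= h (a ∩ x) <= h a whenever c <= a. *)

Section Submodular.
Variables (d : Order.disp_t) (L : latticeType d) (R : numDomainType).
Variables (h : L -> R) (h_sub : submodular h).

Lemma submodular_meet_le (a x : L) : h x <= h (a `|` x)%O -> h (a `&` x)%O <= h a.
Proof.
move=> hx; rewrite -(lerD2r (h x)); apply: le_trans (h_sub a x).
by rewrite addrC lerD2r.
Qed.

End Submodular.

Lemma meet_reducibleP (d : Order.disp_t) (L : latticeType d) (c : L) :
  ~ meet_irreducible c -> ~ is_top c ->
  exists x y : L, [/\ (c < x)%O, (c < y)%O & c = (x `&` y)%O].
Proof.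
move=> nirr ntop; apply: NNPP => nex; apply: nirr; split=> // x y cxy.
apply: NNPP => /not_or_and[cnx cny]; apply: nex; exists x, y.
by rewrite !lt_neqAle cxy leIl leIr -cxy !andbT; split=> //; apply/eqP.
Qed.

Lemma top_le_eq (d : Order.disp_t) (L : latticeType d) (a c : L) :
  is_top c -> (c <= a)%O -> a = c.
Proof. by move=> top ca; apply/eqP; rewrite eq_le ca top. Qed.

Section DownwardInduction.
Variables (d : Order.disp_t) (L : finPOrderType d).

Definition strict_upper_set (c : L) : {set L} := [set z | (c < z)%O].

Lemma card_strict_upper_set_lt (c x : L) :
  (c < x)%O -> (#|strict_upper_set x| < #|strict_upper_set c|)%N.
Proof.
move=> cx; apply: proper_card; apply/properP; split.
  by apply/subsetP=> z; rewrite !inE; apply: lt_trans.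
by exists x; rewrite !inE ?cx ?ltxx.
Qed.

Lemma lt_ind_down (P : L -> Prop) :
  (forall c, (forall x, (c < x)%O -> P x) -> P c) -> forall c, P c.
Proof.
move=> IHc c; have [n] := ubnP #|strict_upper_set c|.
elim: n c => // n IHn c ltcn; apply: IHc => x cx.
by apply: IHn; apply: leq_trans (card_strict_upper_set_lt cx) _.
Qed.

End DownwardInduction.

Theorem lemma8 (d : Order.disp_t) (L : finLatticeType d) (R : realFieldType)
  (h : L -> R) :
  submodular h ->
  (forall a c : L, meet_irreducible c -> (c <= a)%O -> h c <= h a) ->
  forall a c : L, (c <= a)%O -> h c <= h a.
Proof.
move=> h_sub h_irr a c; elim/lt_ind_down: c a => c IH a ca.
have [irr|nirr] := classic (meet_irreducible c); first exact: h_irr.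
have [top|ntop] := classic (is_top c); first by rewrite (top_le_eq top ca).
have [x [y [cx cy cxy]]] := meet_reducibleP nirr ntop.
have -> : c = (a `&` x `&` y)%O by rewrite -meetA -cxy; apply/esym/meet_idPr.
apply: le_trans (submodular_meet_le h_sub _) _; first exact/IH/leUr.
exact/(submodular_meet_le h_sub)/IH/leUr.
Qed.
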